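(* Let $\mathcal C_1$ and $\mathcal C_2$ be $C^2$ closed convex curves that intersect in three or more points. Then there are points $P$ on $\mathcal C_1$ and $Q$ on $\mathcal C_2$ with $\kappa_{\mathcal C_1}(P)=\kappa_{\mathcal C_2}(Q)$.
   Context: Curves are of class $C^2$ with nonvanishing first and second derivative vectors, oriented so that the curvature is positive; $\kappa_{\mathcal C}$ denotes the curvature of the curve $\mathcal C$. *)

From Stdlib Require Import Reals.
From Coquelicot Require Import Coquelicot.
Open Scope R_scope.

Definition C2fun (f : R -> R) : Prop :=
  forall t, ex_derive f t /\ ex_derive (Derive f) t /\
            continuous (Derive (Derive f)) t.

Definition d1 (f : R -> R) := Derive f.
Definition d2 (f : R -> R) := Derive (Derive f).

Definition curvature (x y : R -> R) (t : R) : R :=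
  (d1 x t * d2 y t - d1 y t * d2 x t) /
  Rpower (d1 x t ^ 2 + d1 y t ^ 2) (3 / 2).

(* (x,y) is a C^2 closed convex curve, parametrized with period L > 0,
   with nonvanishing first and second derivative vectors, oriented so that
   the curvature is positive. "Closed" = L-periodic; "convex" = simple
   (injective on one period) and, for every t, the whole trace lies on one
   side of the tangent line at t. *)
Definition closed_convex_C2_curve (x y : R -> R) (L : R) : Prop :=
  0 < L /\
  C2fun x /\ C2fun y /\
  (forall t, x (t + L) = x t /\ y (t + L) = y t) /\
  (forall s t, 0 <= s < L -> 0 <= t < L -> x s = x t -> y s = y t -> s = t) /\
  (forall t, d1 x t ^ 2 + d1 y t ^ 2 > 0) /\
  (forall t, d2 x t ^ 2 + d2 y t ^ 2 > 0) /\
  (forall t, curvature x y t > 0) /\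
  (forall t,
     (forall s, d1 x t * (y s - y t) - d1 y t * (x s - x t) >= 0) \/
     (forall s, d1 x t * (y s - y t) - d1 y t * (x s - x t) <= 0)).

Definition on_curve (x y : R -> R) (p : R * R) : Prop :=
  exists t, p = (x t, y t).

From Stdlib Require Import ZArith Reals Lra Psatz ClassicalEpsilon.
From Coquelicot Require Import Coquelicot.
Open Scope R_scope.

(* The curvature of a closed curve is continuous and periodic, so its values
   form a compact interval; if the two intervals meet, the intermediate value
   theorem gives the common value.  Otherwise, say [kappa1 > 1/r1] and
   [kappa2 < 1/r2] with [r1 < r2].  Blaschke's rolling-disk comparison puts
   C1 inside the disk of radius [r1] tangent to it at any of its points, and C2
   outside the disk of radius [r2] tangent to it from inside at any of its
   points.  For three common points, take the vertex [P] opposite the longest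
   side of the triangle they span: the two disks at [P] force the circumradius
   of the triangle to be at most [r1] and at least [r2]. *)

Ltac clean_eta :=
  repeat match goal with
  | |- context [fun u : R => ?f u] => change (fun u : R => f u) with f
  end.

Ltac continuity_tac :=
  repeat first
    [ assumption | apply continuity_pt_plus | apply continuity_pt_minus
    | apply continuity_pt_mult | apply continuity_pt_opp
    | apply continuity_pt_const; intros ? ?; reflexivity ];
  auto.

Lemma is_derive_pos_right (g : R -> R) a l :
  is_derive g a l -> 0 < l -> exists d, 0 < d /\ forall s, a < s < a + d -> g a < g s.
Proof.
  intros Hg Hl. apply is_derive_Reals in Hg.
  destruct (Hg (l / 2) ltac:(lra)) as [d Hd].
  exists d. split; [apply cond_pos |]. intros s Hs.
  assert (Hds : Rabs (s - a) < d) by (rewrite Rabs_right; lra).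
  specialize (Hd (s - a) ltac:(lra) Hds).
  replace (a + (s - a)) with s in Hd by ring.
  apply Rabs_def2 in Hd.
  assert (Hprod : 0 < (g s - g a) / (s - a) * (s - a)) by (apply Rmult_lt_0_compat; lra).
  replace ((g s - g a) / (s - a) * (s - a)) with (g s - g a) in Hprod by (field; lra).
  lra.
Qed.

Lemma is_derive_max_eq0 (f : R -> R) a l :
  is_derive f a l -> (forall s, f s <= f a) -> l = 0.
Proof.
  intros Hf Hmax.
  exact (deriv_maximum f (a - 1) (a + 1) a (exist _ l (proj1 (is_derive_Reals _ _ _) Hf))
           ltac:(lra) ltac:(lra) (fun s _ _ => Hmax s)).
Qed.

Lemma Rlt_of_derive_pos (f df : R -> R) a b :
  a < b -> (forall c, is_derive f c (df c)) -> (forall c, a < c < b -> 0 < df c) ->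
  f a < f b.
Proof.
  intros Hab Hf Hpos.
  destruct (MVT_cor2 f df a b Hab) as [c [Hc Hcab]].
  - intros c _. apply is_derive_Reals, Hf.
  - specialize (Hpos c Hcab). nra.
Qed.

Lemma max_of_factored_derive (f k u : R -> R) s0 du :
  (forall c, is_derive f c (k c * u c)) -> (forall c, 0 < k c) ->
  (forall s, f s <= f s0) -> is_derive u s0 du -> u s0 = 0 /\ du <= 0.
Proof.
  intros Hf Hk Hmax Hu.
  assert (Hu0 : u s0 = 0).
  { destruct (Rmult_integral _ _ (is_derive_max_eq0 f s0 _ (Hf s0) Hmax)) as [E | E];
      [specialize (Hk s0); lra | exact E]. }
  split; [exact Hu0 |]. apply Rnot_lt_le. intros Hdu.
  destruct (is_derive_pos_right u s0 du Hu Hdu) as [d [Hd Hinc]].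
  assert (Hlt : f s0 < f (s0 + d / 2)).
  { apply (Rlt_of_derive_pos f (fun c => k c * u c)); [lra | exact Hf |].
    intros c Hc. specialize (Hinc c ltac:(lra)). specialize (Hk c). nra. }
  specialize (Hmax (s0 + d / 2)). lra.
Qed.

Lemma continuity_pt_of_ex_derive (f : R -> R) t : ex_derive f t -> continuity_pt f t.
Proof.
  intros H. apply continuity_pt_filterlim.
  exact (ex_derive_continuous (K := R_AbsRing) (V := R_NormedModule) f t H).
Qed.

Lemma continuity_pt_of_dominated (M F : R -> R) s :
  (forall s', Rabs (M s' - M s) <= F s') -> continuity_pt F s -> F s = 0 ->
  continuity_pt M s.
Proof.
  intros Hdom HF HF0 eps Heps.
  destruct (HF eps Heps) as [alp [Halp Hclose]].
  exists alp. split; [exact Halp |]. intros s' Hs'.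
  specialize (Hclose s' Hs'). simpl in *. unfold R_dist in *.
  rewrite HF0, Rminus_0_r in Hclose.
  eapply Rle_lt_trans; [apply Hdom |]. eapply Rle_lt_trans; [apply Rle_abs | exact Hclose].
Qed.

Definition periodic (L : R) (f : R -> R) := forall t, f (t + L) = f t.

Lemma periodic_nat L f : periodic L f -> forall (n : nat) t, f (t + INR n * L) = f t.
Proof.
  intros Hp n. induction n as [|n IH]; intros t.
  - simpl. f_equal. ring.
  - rewrite S_INR. replace (t + (INR n + 1) * L) with (t + INR n * L + L) by ring.
    rewrite Hp. apply IH.
Qed.

Lemma periodic_Z L f : periodic L f -> forall (z : Z) t, f (t + IZR z * L) = f t.
Proof.
  intros Hp z t. destruct z as [|p|p].
  - simpl. f_equal. ring.
  - rewrite <- positive_nat_Z, <- INR_IZR_INZ. apply periodic_nat, Hp.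
  - rewrite IZR_NEG, <- positive_nat_Z, <- INR_IZR_INZ.
    rewrite <- (periodic_nat L f Hp (Pos.to_nat p)). f_equal. ring.
Qed.

Lemma shift_into_period L t : 0 < L -> exists z : Z, 0 <= t + IZR z * L <= L.
Proof.
  intros HL. destruct (archimed (t / L)) as [Hup1 Hup2].
  exists (1 - up (t / L))%Z. rewrite minus_IZR.
  assert (Ht : t = t / L * L) by (field; lra).
  split; rewrite Ht at 1; nra.
Qed.

Lemma periodic_Derive L f :
  (forall t, ex_derive f t) -> periodic L f -> periodic L (Derive f).
Proof.
  intros Hd Hp t. symmetry. apply is_derive_unique.
  apply (is_derive_ext (fun s => f (s + L))); [intros s; apply Hp |].
  rewrite <- (Rmult_1_l (Derive f (t + L))).
  apply (is_derive_comp f (fun s => s + L)); [apply Derive_correct, Hd |].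
  auto_derive; [exact I | ring].
Qed.

Lemma periodic_Derive2 L f : C2fun f -> periodic L f ->
  periodic L (Derive f) /\ periodic L (Derive (Derive f)).
Proof.
  intros Hf Hp.
  assert (Hd : periodic L (Derive f)) by (apply periodic_Derive; [apply Hf | exact Hp]).
  split; [exact Hd | apply periodic_Derive; [apply Hf | exact Hd]].
Qed.

Section PeriodicContinuous.
Variables (L : R) (f : R -> R).
Hypotheses (HL : 0 < L) (Hp : periodic L f) (Hc : forall t, continuity_pt f t).

Lemma periodic_continuous_max : exists t0, forall t, f t <= f t0.
Proof.
  destruct (continuity_ab_maj f 0 L ltac:(lra)) as [t0 [Hmax _]]; [intros c _; apply Hc |].
  exists t0. intros t. destruct (shift_into_period L t HL) as [z Hz].
  rewrite <- (periodic_Z L f Hp z t). apply Hmax, Hz.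
Qed.

Lemma periodic_continuous_min : exists t0, forall t, f t0 <= f t.
Proof.
  destruct (continuity_ab_min f 0 L ltac:(lra)) as [t0 [Hmin _]]; [intros c _; apply Hc |].
  exists t0. intros t. destruct (shift_into_period L t HL) as [z Hz].
  rewrite <- (periodic_Z L f Hp z t). apply Hmin, Hz.
Qed.

Lemma periodic_continuous_bounded : exists B, forall t, Rabs (f t) <= B.
Proof.
  destruct (continuity_ab_maj (fun t => Rabs (f t)) 0 L ltac:(lra)) as [t0 [Hmax _]].
  { intros c _. apply (continuity_pt_comp f Rabs); [apply Hc | apply Rcontinuity_abs]. }
  exists (Rabs (f t0)). intros t. destruct (shift_into_period L t HL) as [z Hz].
  rewrite <- (periodic_Z L f Hp z t). apply Hmax, Hz.
Qed.

End PeriodicContinuous.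

Section SeparablePeriodicMax.
Variables (L : R) (A D a1 a2 c1 c2 : R -> R).
Hypothesis HL : 0 < L.
Hypotheses (cA : forall t, continuity_pt A t) (cD : forall s, continuity_pt D s)
  (ca1 : forall t, continuity_pt a1 t) (ca2 : forall t, continuity_pt a2 t)
  (cc1 : forall s, continuity_pt c1 s) (cc2 : forall s, continuity_pt c2 s).
Hypotheses (pA : periodic L A) (pD : periodic L D) (pa1 : periodic L a1)
  (pa2 : periodic L a2) (pc1 : periodic L c1) (pc2 : periodic L c2).

Let G s t := A t + D s + a1 t * c1 s + a2 t * c2 s.

(* Maximise first in [t] and then in [s]: the partial maximum is continuous in
   [s] because [G] depends on [s] only through [D], [c1], [c2], with bounded
   weights [a1], [a2]. *)
Lemma separable_periodic_max : exists s0 t0, forall s t, G s t <= G s0 t0.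
Proof.
  destruct (periodic_continuous_bounded L a1 HL pa1 ca1) as [B1 HB1].
  destruct (periodic_continuous_bounded L a2 HL pa2 ca2) as [B2 HB2].
  assert (Hrow : forall s, exists t0, forall t, G s t <= G s t0).
  { intros s. apply (periodic_continuous_max L (G s) HL).
    - intros t. unfold G. rewrite pA, pa1, pa2. reflexivity.
    - intros t. unfold G. continuity_tac. }
  destruct (choice _ Hrow) as [tm Htm].
  set (M := fun s => G s (tm s)).
  set (F := fun s s' =>
    Rabs (D s' - D s) + B1 * Rabs (c1 s' - c1 s) + B2 * Rabs (c2 s' - c2 s)).
  assert (HGdiff : forall s s' t, Rabs (G s' t - G s t) <= F s s').
  { intros s s' t. unfold G, F.
    replace (_ - _) with ((D s' - D s) + a1 t * (c1 s' - c1 s) + a2 t * (c2 s' - c2 s))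
      by ring.
    eapply Rle_trans; [apply Rabs_triang |]. apply Rplus_le_compat;
      [eapply Rle_trans; [apply Rabs_triang |]; apply Rplus_le_compat_l |];
      rewrite Rabs_mult; apply Rmult_le_compat_r; auto using Rabs_pos. }
  assert (HMdiff : forall s s', Rabs (M s' - M s) <= F s s').
  { intros s s'. apply Rabs_le.
    pose proof (proj1 (Rabs_le_between _ _) (HGdiff s s' (tm s))).
    pose proof (proj1 (Rabs_le_between _ _) (HGdiff s s' (tm s'))).
    pose proof (Htm s (tm s')). pose proof (Htm s' (tm s)).
    unfold M. lra. }
  assert (HMcont : forall s, continuity_pt M s).
  { intros s. apply (continuity_pt_of_dominated M (F s) s (HMdiff s)).
    - assert (Hcabs : forall f, (forall u, continuity_pt f u) ->
                continuity_pt (fun s' => Rabs (f s' - f s)) s).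
      { intros f Hf. apply (continuity_pt_comp (fun s' => f s' - f s) Rabs);
          [continuity_tac | apply Rcontinuity_abs]. }
      unfold F. continuity_tac.
    - unfold F. rewrite !Rminus_diag, !Rabs_R0. ring. }
  assert (HMper : periodic L M).
  { assert (HGper : forall s t, G (s + L) t = G s t).
    { intros s t. unfold G. rewrite pD, pc1, pc2. reflexivity. }
    intros s. unfold M. apply Rle_antisym.
    - rewrite HGper. apply Htm.
    - rewrite <- (HGper s (tm s)). apply Htm. }
  destruct (periodic_continuous_max L M HL HMper HMcont) as [s0 Hs0].
  exists s0, (tm s0). intros s t.
  eapply Rle_trans; [apply (Htm s) | apply Hs0].
Qed.

End SeparablePeriodicMax.

Lemma sqr_le_of_unit_dot m1 m2 z1 z2 r :
  m1 ^ 2 + m2 ^ 2 = 1 -> 0 <= r -> r <= m1 * z1 + m2 * z2 -> r ^ 2 <= z1 ^ 2 + z2 ^ 2.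
Proof.
  intros Hm Hr Hdot.
  assert (Hlag : z1 ^ 2 + z2 ^ 2 = (m1 * z1 + m2 * z2) ^ 2 + (m1 * z2 - m2 * z1) ^ 2)
    by (rewrite <- (Rmult_1_l (z1 ^ 2 + z2 ^ 2)), <- Hm; ring).
  rewrite Hlag. pose proof (pow2_ge_0 (m1 * z2 - m2 * z1)). nra.
Qed.

Lemma gram_form_lower U V g a b :
  0 < U -> 0 < V -> 2 * g <= U -> 2 * g <= V -> g * g <= U * V -> U <= a -> V <= b ->
  U * V * (U + V - 2 * g) <= V * a ^ 2 - 2 * g * a * b + U * b ^ 2.
Proof.
  intros HU HV HgU HgV Hgg Ha Hb.
  set (s := a - U). set (t := b - V).
  assert (Hs : 0 <= s) by (unfold s; lra). assert (Ht : 0 <= t) by (unfold t; lra).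
  assert (Hst : 0 <= V * s ^ 2 - 2 * g * s * t + U * t ^ 2).
  { apply (Rmult_le_reg_l V); [exact HV |]. rewrite Rmult_0_r.
    replace (V * (V * s ^ 2 - 2 * g * s * t + U * t ^ 2))
      with ((V * s - g * t) ^ 2 + (U * V - g * g) * t ^ 2) by ring.
    pose proof (pow2_ge_0 (V * s - g * t)). pose proof (pow2_ge_0 t). nra. }
  replace a with (U + s) by (unfold s; ring). replace b with (V + t) by (unfold t; ring).
  assert (0 <= s * V * (U - g)) by (apply Rmult_le_pos; [apply Rmult_le_pos |]; lra).
  assert (0 <= t * U * (V - g)) by (apply Rmult_le_pos; [apply Rmult_le_pos |]; lra).
  nra.
Qed.

Lemma gram_form_upper U V g a b :
  0 < U -> 0 < V -> 2 * g <= U -> 2 * g <= V -> 0 <= a <= U -> 0 <= b <= V ->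
  V * a ^ 2 - 2 * g * a * b + U * b ^ 2 <= U * V * (U + V - 2 * g).
Proof.
  intros HU HV HgU HgV Ha Hb.
  assert (V * a ^ 2 <= V * a * U).
  { replace (V * a * U) with (V * (a * U)) by ring. apply Rmult_le_compat_l; nra. }
  assert (U * b ^ 2 <= U * b * V).
  { replace (U * b * V) with (U * (b * V)) by ring. apply Rmult_le_compat_l; nra. }
  assert (Hco : 0 <= U * V - 2 * g * b).
  { destruct (Rle_or_lt 0 g); [| nra].
    assert (g * b <= g * V) by (apply Rmult_le_compat_l; lra). nra. }
  assert (a * (U * V - 2 * g * b) <= U * (U * V - 2 * g * b))
    by (apply Rmult_le_compat_r; lra).
  assert (b * (U * (V - 2 * g)) <= V * (U * (V - 2 * g)))
    by (apply Rmult_le_compat_r; [apply Rmult_le_pos |]; lra).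
  nra.
Qed.

(* With [u = Q - P], [v = R - P] and [X = (u1 v2 - u2 v1)^2], the circumradius
   [rho] of [PQR] satisfies [4 rho^2 X = |u|^2 |v|^2 |u - v|^2].  When [QR] is
   the longest side, the conditions on [m] give [rho <= r1] (through
   [gram_form_lower]) and those on [n] give [rho >= r2]. *)
Lemma no_triangle_between_disks u1 u2 v1 v2 m1 m2 n1 n2 r1 r2 :
  m1 ^ 2 + m2 ^ 2 = 1 -> n1 ^ 2 + n2 ^ 2 = 1 -> 0 < r1 -> r1 < r2 ->
  u1 ^ 2 + u2 ^ 2 <= 2 * r1 * (m1 * u1 + m2 * u2) ->
  v1 ^ 2 + v2 ^ 2 <= 2 * r1 * (m1 * v1 + m2 * v2) ->
  0 <= n1 * u1 + n2 * u2 -> 2 * r2 * (n1 * u1 + n2 * u2) <= u1 ^ 2 + u2 ^ 2 ->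
  0 <= n1 * v1 + n2 * v2 -> 2 * r2 * (n1 * v1 + n2 * v2) <= v1 ^ 2 + v2 ^ 2 ->
  2 * (u1 * v1 + u2 * v2) <= u1 ^ 2 + u2 ^ 2 ->
  2 * (u1 * v1 + u2 * v2) <= v1 ^ 2 + v2 ^ 2 ->
  0 < u1 ^ 2 + u2 ^ 2 -> 0 < v1 ^ 2 + v2 ^ 2 -> 0 < (u1 - v1) ^ 2 + (u2 - v2) ^ 2 ->
  False.
Proof.
  intros Hm Hn Hr1 Hr12 Hmu Hmv Hnu0 Hnu Hnv0 Hnv HgU HgV HU HV HW.
  set (X := (u1 * v2 - u2 * v1) ^ 2).
  assert (Hform : forall p1 p2 r, p1 ^ 2 + p2 ^ 2 = 1 ->
    let a := 2 * r * (p1 * u1 + p2 * u2) in let b := 2 * r * (p1 * v1 + p2 * v2) in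
    (v1 ^ 2 + v2 ^ 2) * a ^ 2 - 2 * (u1 * v1 + u2 * v2) * a * b + (u1 ^ 2 + u2 ^ 2) * b ^ 2
    = 4 * r ^ 2 * X).
  { intros p1 p2 r Hp a b. unfold a, b, X.
    rewrite <- (Rmult_1_r (4 * r ^ 2 * _)), <- Hp. ring. }
  assert (Hgg : (u1 * v1 + u2 * v2) * (u1 * v1 + u2 * v2) <=
                (u1 ^ 2 + u2 ^ 2) * (v1 ^ 2 + v2 ^ 2)).
  { pose proof (pow2_ge_0 (u1 * v2 - u2 * v1)). nra. }
  pose proof (gram_form_lower _ _ _ _ _ HU HV HgU HgV Hgg Hmu Hmv) as Hlow.
  pose proof (gram_form_upper _ _ _ (2 * r2 * (n1 * u1 + n2 * u2))
                (2 * r2 * (n1 * v1 + n2 * v2)) HU HV HgU HgV ltac:(nra) ltac:(nra)) as Hup.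
  rewrite (Hform m1 m2 r1 Hm) in Hlow. rewrite (Hform n1 n2 r2 Hn) in Hup.
  assert (HUVW : 0 < (u1 ^ 2 + u2 ^ 2) * (v1 ^ 2 + v2 ^ 2) *
                     ((u1 ^ 2 + u2 ^ 2) + (v1 ^ 2 + v2 ^ 2) - 2 * (u1 * v1 + u2 * v2))).
  { apply Rmult_lt_0_compat; [apply Rmult_lt_0_compat; lra | nra]. }
  assert (0 <= X) by apply pow2_ge_0.
  assert (r1 ^ 2 < r2 ^ 2) by nra.
  nra.
Qed.

Definition speed (x y : R -> R) t := sqrt (Derive x t ^ 2 + Derive y t ^ 2).

Definition kappa (x y : R -> R) t :=
  (Derive x t * Derive (Derive y) t - Derive y t * Derive (Derive x) t) / speed x y t ^ 3.

Definition normal_x (x y : R -> R) t := - Derive y t / speed x y t.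
Definition normal_y (x y : R -> R) t := Derive x t / speed x y t.

Definition tangent_height (x y : R -> R) s t :=
  normal_x x y s * (x t - x s) + normal_y x y s * (y t - y s).

Definition dist2 (x y : R -> R) s t := (x t - x s) ^ 2 + (y t - y s) ^ 2.

(* [P s + r N s] is the centre of the disk of radius [r] tangent to the curve at
   [s] on its inner side; [center_line_dist r s p] is the signed distance from
   that centre to the tangent line at [p]. *)
Definition center_dist2 (x y : R -> R) r s t :=
  (x t - (x s + r * normal_x x y s)) ^ 2 + (y t - (y s + r * normal_y x y s)) ^ 2.

Definition center_line_dist (x y : R -> R) r s p :=
  tangent_height x y p s +
  r * (normal_x x y p * normal_x x y s + normal_y x y p * normal_y x y s).

Section RegularCurve.
Variables x y : R -> R.
Hypotheses (Hx : C2fun x) (Hy : C2fun y).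
Hypothesis Hreg : forall t, 0 < Derive x t ^ 2 + Derive y t ^ 2.

Lemma speed_pos t : 0 < speed x y t.
Proof. apply sqrt_lt_R0, Hreg. Qed.

Lemma speed_sqr t : speed x y t ^ 2 = Derive x t ^ 2 + Derive y t ^ 2.
Proof. unfold speed. rewrite pow2_sqrt; [reflexivity | left; apply Hreg]. Qed.

Lemma curvature_kappa t : curvature x y t = kappa x y t.
Proof.
  unfold curvature, kappa, d1, d2.
  replace (3 / 2) with (1 + / 2) by field.
  rewrite Rpower_plus, Rpower_1, Rpower_sqrt by apply Hreg.
  fold (speed x y t). rewrite <- speed_sqr. field. pose proof (speed_pos t). lra.
Qed.

Lemma is_derive_speed t :
  is_derive (speed x y) t
    ((Derive x t * Derive (Derive x) t + Derive y t * Derive (Derive y) t) / speed x y t).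
Proof.
  pose proof (speed_pos t) as Hv. unfold speed in *. auto_derive.
  - repeat split; try apply Hx; try apply Hy. apply Hreg.
  - clean_eta. cbn [pow] in *. field. lra.
Qed.

Lemma is_derive_normal_x t : is_derive (normal_x x y) t (- kappa x y t * Derive x t).
Proof.
  pose proof (speed_pos t) as Hv. pose proof (speed_sqr t) as Hv2.
  unfold normal_x. auto_derive.
  - repeat split; [apply Hy | eexists; apply is_derive_speed | lra].
  - clean_eta. rewrite (is_derive_unique _ _ _ (is_derive_speed t)).
    match goal with |- ?lhs = ?rhs =>
      replace lhs with (rhs + Derive (Derive y) t *
        (Derive x t ^ 2 + Derive y t ^ 2 - speed x y t ^ 2) / speed x y t ^ 3)
        by (unfold kappa; field; lra) end.
    rewrite Hv2. field. lra.
Qed.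

Lemma is_derive_normal_y t : is_derive (normal_y x y) t (- kappa x y t * Derive y t).
Proof.
  pose proof (speed_pos t) as Hv. pose proof (speed_sqr t) as Hv2.
  unfold normal_y. auto_derive.
  - repeat split; [apply Hx | eexists; apply is_derive_speed | lra].
  - clean_eta. rewrite (is_derive_unique _ _ _ (is_derive_speed t)).
    match goal with |- ?lhs = ?rhs =>
      replace lhs with (rhs - Derive (Derive x) t *
        (Derive x t ^ 2 + Derive y t ^ 2 - speed x y t ^ 2) / speed x y t ^ 3)
        by (unfold kappa; field; lra) end.
    rewrite Hv2. field. lra.
Qed.

Lemma continuity_pt_curve u :
  continuity_pt x u /\ continuity_pt y u /\
  continuity_pt (normal_x x y) u /\ continuity_pt (normal_y x y) u.
Proof.
  repeat split; apply continuity_pt_of_ex_derive;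
    first [apply Hx | apply Hy | eexists; apply is_derive_normal_x
          | eexists; apply is_derive_normal_y].
Qed.

Lemma continuity_pt_kappa t : continuity_pt (kappa x y) t.
Proof.
  assert (Hv : forall u, continuity_pt (speed x y) u).
  { intros u. apply continuity_pt_of_ex_derive. eexists. apply is_derive_speed. }
  assert (Hd : forall f, C2fun f -> forall u,
     continuity_pt (Derive f) u /\ continuity_pt (Derive (Derive f)) u).
  { intros f Hf u. split; [apply continuity_pt_of_ex_derive, Hf |].
    apply continuity_pt_filterlim, Hf. }
  destruct (Hd x Hx t), (Hd y Hy t).
  unfold kappa. apply continuity_pt_div; [continuity_tac | continuity_tac |].
  apply pow_nonzero. pose proof (speed_pos t). lra.
Qed.

Lemma normal_unit t : normal_x x y t ^ 2 + normal_y x y t ^ 2 = 1.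
Proof.
  pose proof (speed_pos t). unfold normal_x, normal_y.
  replace 1 with (speed x y t ^ 2 / speed x y t ^ 2) by (field; lra).
  rewrite speed_sqr at 1. field. lra.
Qed.

Lemma normal_dot_accel t :
  normal_x x y t * Derive (Derive x) t + normal_y x y t * Derive (Derive y) t =
  kappa x y t * speed x y t ^ 2.
Proof. pose proof (speed_pos t). unfold normal_x, normal_y, kappa. field. lra. Qed.

Lemma collinear_normal_of_orth_velocity t a b :
  Derive x t * a + Derive y t * b = 0 ->
  a = (normal_x x y t * a + normal_y x y t * b) * normal_x x y t /\
  b = (normal_x x y t * a + normal_y x y t * b) * normal_y x y t.
Proof.
  intros Horth. set (h := normal_x x y t * a + normal_y x y t * b).
  pose proof (speed_pos t). pose proof (speed_sqr t) as Hv2.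
  set (S := Derive x t ^ 2 + Derive y t ^ 2) in Hv2.
  split; apply Rminus_diag_uniq.
  - replace (a - h * normal_x x y t) with
      ((Derive x t * (Derive x t * a + Derive y t * b) + a * (speed x y t ^ 2 - S))
       / speed x y t ^ 2) by (unfold h, normal_x, normal_y, S; field; lra).
    rewrite Horth, Hv2, Rminus_diag. unfold Rdiv. ring.
  - replace (b - h * normal_y x y t) with
      ((Derive y t * (Derive x t * a + Derive y t * b) + b * (speed x y t ^ 2 - S))
       / speed x y t ^ 2) by (unfold h, normal_x, normal_y, S; field; lra).
    rewrite Horth, Hv2, Rminus_diag. unfold Rdiv. ring.
Qed.

Lemma center_dist2_eq r s t :
  center_dist2 x y r s t = dist2 x y s t - 2 * r * tangent_height x y s t + r ^ 2.
Proof.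
  rewrite <- (Rmult_1_r (r ^ 2)), <- (normal_unit s).
  unfold center_dist2, dist2, tangent_height. ring.
Qed.

(* The centre moves with velocity [(1 - r kappa) P'], which is orthogonal to [N]. *)
Lemma is_derive_center_dist2 r t s :
  is_derive (fun s => center_dist2 x y r s t) s
    (2 * (r * kappa x y s - 1) * (Derive x s * (x t - x s) + Derive y s * (y t - y s))).
Proof.
  pose proof (speed_pos s). unfold center_dist2. auto_derive.
  - repeat split; try apply Hx; try apply Hy;
      eexists; [apply is_derive_normal_x | apply is_derive_normal_y].
  - clean_eta.
    rewrite (is_derive_unique _ _ _ (is_derive_normal_x s)),
            (is_derive_unique _ _ _ (is_derive_normal_y s)).
    unfold normal_x, normal_y. field. lra.
Qed.

Lemma is_derive_center_line_dist r p s :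
  is_derive (fun s => center_line_dist x y r s p) s
    ((1 - r * kappa x y s) *
     (normal_x x y p * Derive x s + normal_y x y p * Derive y s)).
Proof.
  unfold center_line_dist, tangent_height. auto_derive.
  - repeat split; try apply Hx; try apply Hy;
      eexists; [apply is_derive_normal_x | apply is_derive_normal_y].
  - clean_eta.
    rewrite (is_derive_unique _ _ _ (is_derive_normal_x s)),
            (is_derive_unique _ _ _ (is_derive_normal_y s)).
    ring.
Qed.

Section ConvexCurve.
Hypothesis Hk : forall t, 0 < kappa x y t.
Hypothesis Hcv : forall t,
  (forall s, d1 x t * (y s - y t) - d1 y t * (x s - x t) >= 0) \/
  (forall s, d1 x t * (y s - y t) - d1 y t * (x s - x t) <= 0).

(* Positive curvature rules out the second alternative of [Hcv]: near [s] the
   curve lies strictly on the side of the tangent line the normal points to. *)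
Lemma tangent_height_nonneg s t : 0 <= tangent_height x y s t.
Proof.
  pose proof (speed_pos s) as Hv.
  set (h := fun u => Derive x s * (y u - y s) - Derive y s * (x u - x s)).
  replace (tangent_height x y s t) with (h t / speed x y s)
    by (unfold h, tangent_height, normal_x, normal_y; field; lra).
  apply Rdiv_le_0_compat; [| exact Hv].
  destruct (Hcv s) as [Hge | Hle]; [apply Rge_le, Hge |]. exfalso.
  set (h' := fun u => Derive x s * Derive y u - Derive y s * Derive x u).
  set (c := Derive x s * Derive (Derive y) s - Derive y s * Derive (Derive x) s).
  destruct (max_of_factored_derive h (fun _ => 1) h' s c) as [_ Hc].
  - intros u. unfold h, h'.
    auto_derive; [repeat split; try apply Hx; try apply Hy | clean_eta; ring].
  - intros _. lra.
  - intros u. replace (h s) with 0 by (unfold h; ring). apply Hle.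
  - unfold h', c.
    auto_derive; [repeat split; try apply Hx; try apply Hy | clean_eta; ring].
  - assert (0 < c).
    { replace c with (kappa x y s * speed x y s ^ 3) by (unfold kappa, c; field; lra).
      apply Rmult_lt_0_compat; [apply Hk | apply pow_lt, Hv]. }
    lra.
Qed.

Section ClosedCurve.
Variable L : R.
Hypotheses (HL : 0 < L) (Hpx : periodic L x) (Hpy : periodic L y).

Lemma periodic_speed : periodic L (speed x y).
Proof.
  intros t. unfold speed.
  rewrite (proj1 (periodic_Derive2 L x Hx Hpx)), (proj1 (periodic_Derive2 L y Hy Hpy)).
  reflexivity.
Qed.

Lemma periodic_kappa : periodic L (kappa x y).
Proof.
  intros t. unfold kappa. rewrite periodic_speed.
  destruct (periodic_Derive2 L x Hx Hpx) as [-> ->].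
  destruct (periodic_Derive2 L y Hy Hpy) as [-> ->]. reflexivity.
Qed.

Lemma periodic_normal_x : periodic L (normal_x x y).
Proof.
  intros t. unfold normal_x.
  rewrite periodic_speed, (proj1 (periodic_Derive2 L y Hy Hpy)). reflexivity.
Qed.

Lemma periodic_normal_y : periodic L (normal_y x y).
Proof.
  intros t. unfold normal_y.
  rewrite periodic_speed, (proj1 (periodic_Derive2 L x Hx Hpx)). reflexivity.
Qed.

Lemma center_dist2_attains_max r :
  exists s0 t0, forall s t, center_dist2 x y r s t <= center_dist2 x y r s0 t0.
Proof.
  set (cx := fun s => x s + r * normal_x x y s).
  set (cy := fun s => y s + r * normal_y x y s).
  destruct (separable_periodic_max L (fun t => x t * x t + y t * y t)
              (fun s => cx s * cx s + cy s * cy s) x y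
              (fun s => -2 * cx s) (fun s => -2 * cy s) HL) as [s0 [t0 H]];
    try (intros u; unfold cx, cy;
         destruct (continuity_pt_curve u) as (? & ? & ? & ?); continuity_tac; fail);
    try (intros u; unfold cx, cy;
         rewrite ?Hpx, ?Hpy, ?periodic_normal_x, ?periodic_normal_y; reflexivity).
  exists s0, t0. intros s t. specialize (H s t).
  unfold center_dist2, cx, cy in *. nra.
Qed.

Lemma center_line_dist_attains_min r :
  exists s0 p0, forall s p, center_line_dist x y r s0 p0 <= center_line_dist x y r s p.
Proof.
  set (cx := fun s => - (x s + r * normal_x x y s)).
  set (cy := fun s => - (y s + r * normal_y x y s)).
  destruct (separable_periodic_max L
              (fun p => normal_x x y p * x p + normal_y x y p * y p) (fun _ => 0)
              (normal_x x y) (normal_y x y) cx cy HL) as [s0 [p0 H]];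
    try (intros u; unfold cx, cy;
         destruct (continuity_pt_curve u) as (? & ? & ? & ?); continuity_tac; fail);
    try (intros u; unfold cx, cy;
         rewrite ?Hpx, ?Hpy, ?periodic_normal_x, ?periodic_normal_y; reflexivity).
  exists s0, p0. intros s p. specialize (H s p).
  unfold center_line_dist, tangent_height, cx, cy in *. nra.
Qed.

(* If [kappa > 1/r], the curve lies in the disk of radius [r] tangent to it at
   any of its points.  At a pair [(s0, t0)] maximising [center_dist2], the chord
   [P t0 - P s0] is normal at [s0], of length [h > 2 r], and then
   [d/ds (P' s . (P t0 - P s))] at [s0] equals [(h kappa - 1) |P'|^2 > 0], so
   [center_dist2] still increases in [s]. *)
Lemma inner_disk r : 0 < r -> (forall t, 1 < r * kappa x y t) ->
  forall s t, dist2 x y s t <= 2 * r * tangent_height x y s t.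
Proof.
  intros Hr Hkr s t. apply Rnot_lt_le. intros Hout.
  destruct (center_dist2_attains_max r) as [s0 [t0 Hmax]].
  assert (Hfar : r ^ 2 < center_dist2 x y r s0 t0).
  { pose proof (Hmax s t) as Hst. rewrite !center_dist2_eq in *. lra. }
  set (du := Derive (Derive x) s0 * (x t0 - x s0) + Derive (Derive y) s0 * (y t0 - y s0)
             - (Derive x s0 ^ 2 + Derive y s0 ^ 2)).
  destruct (max_of_factored_derive (fun s => center_dist2 x y r s t0)
              (fun s => 2 * (r * kappa x y s - 1))
              (fun s => Derive x s * (x t0 - x s) + Derive y s * (y t0 - y s)) s0 du)
    as [Horth Hdu].
  - intros c. apply is_derive_center_dist2.
  - intros c. specialize (Hkr c). lra.
  - intros s'. apply Hmax.
  - unfold du. auto_derive; [repeat split; try apply Hx; try apply Hy | clean_eta; ring].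
  - set (h := tangent_height x y s0 t0).
    destruct (collinear_normal_of_orth_velocity s0 _ _ Horth) as [E1 E2].
    fold (tangent_height x y s0 t0) h in E1, E2.
    assert (Hd2 : dist2 x y s0 t0 = h ^ 2).
    { unfold dist2. rewrite E1, E2, <- (Rmult_1_r (h ^ 2)), <- (normal_unit s0). ring. }
    assert (H2r : 2 * r < h).
    { assert (0 <= h) by apply tangent_height_nonneg.
      rewrite center_dist2_eq, Hd2 in Hfar. fold h in Hfar.
      apply Rnot_le_lt. intros Hle.
      assert (0 <= h * (2 * r - h)) by (apply Rmult_le_pos; lra). lra. }
    assert (Hdu' : du = (h * kappa x y s0 - 1) * speed x y s0 ^ 2).
    { unfold du. rewrite E1, E2, <- speed_sqr.
      replace ((h * kappa x y s0 - 1) * speed x y s0 ^ 2)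
        with (h * (kappa x y s0 * speed x y s0 ^ 2) - speed x y s0 ^ 2) by ring.
      rewrite <- (normal_dot_accel s0). ring. }
    pose proof (speed_pos s0). pose proof (Hkr s0). pose proof (Hk s0).
    assert (1 < h * kappa x y s0) by nra.
    assert (0 < du) by (rewrite Hdu'; apply Rmult_lt_0_compat; [lra | apply pow_lt; lra]).
    lra.
Qed.

(* If [kappa < 1/r], the disk of radius [r] tangent to the curve from inside at
   any point lies on the inner side of every tangent line.  At a pair [(s0, p0)]
   minimising [center_line_dist], the normals at [s0] and [p0] are parallel:
   equal normals contradict convexity, opposite ones the sign of [kappa]. *)
Lemma outer_disk_support r : 0 < r -> (forall t, r * kappa x y t < 1) ->
  forall s p, r <= center_line_dist x y r s p.
Proof.
  intros Hr Hkr s p. apply Rnot_lt_le. intros Hin.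
  destruct (center_line_dist_attains_min r) as [s0 [p0 Hmin]].
  set (n1 := normal_x x y p0). set (n2 := normal_y x y p0).
  destruct (max_of_factored_derive (fun s => - center_line_dist x y r s p0)
              (fun s => 1 - r * kappa x y s) (fun s => - (n1 * Derive x s + n2 * Derive y s))
              s0 (- (n1 * Derive (Derive x) s0 + n2 * Derive (Derive y) s0)))
    as [Horth Hacc].
  - intros c. replace ((1 - r * kappa x y c) * - (n1 * Derive x c + n2 * Derive y c))
      with (- ((1 - r * kappa x y c) * (n1 * Derive x c + n2 * Derive y c))) by ring.
    apply (is_derive_opp (fun s => center_line_dist x y r s p0)).
    apply is_derive_center_line_dist.
  - intros c. specialize (Hkr c). lra.
  - intros s'. specialize (Hmin s' p0). lra.
  - auto_derive; [repeat split; try apply Hx; try apply Hy | clean_eta; ring].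
  - destruct (collinear_normal_of_orth_velocity s0 n1 n2 ltac:(lra)) as [E1 E2].
    set (sigma := normal_x x y s0 * n1 + normal_y x y s0 * n2) in E1, E2.
    assert (Hsig2 : sigma ^ 2 = 1).
    { rewrite <- (normal_unit p0). fold n1 n2. rewrite E1, E2.
      rewrite <- (Rmult_1_r (sigma ^ 2)), <- (normal_unit s0). ring. }
    assert (Hsig : 0 <= sigma).
    { assert (Hdot : n1 * Derive (Derive x) s0 + n2 * Derive (Derive y) s0 =
                     sigma * (kappa x y s0 * speed x y s0 ^ 2))
        by (rewrite E1, E2, <- normal_dot_accel; ring).
      pose proof (Hk s0). pose proof (speed_pos s0).
      assert (0 < kappa x y s0 * speed x y s0 ^ 2)
        by (apply Rmult_lt_0_compat; [lra | apply pow_lt; lra]).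
      nra. }
    assert (Hsig1 : sigma = 1) by nra.
    pose proof (tangent_height_nonneg p0 s0). specialize (Hmin s p).
    unfold center_line_dist in Hmin. fold n1 n2 in Hmin.
    replace (n1 * normal_x x y s0 + n2 * normal_y x y s0) with sigma in Hmin
      by (unfold sigma; ring).
    rewrite Hsig1 in Hmin. unfold center_line_dist in Hin. lra.
Qed.

Lemma outer_disk r : 0 < r -> (forall t, r * kappa x y t < 1) ->
  forall s t, 2 * r * tangent_height x y s t <= dist2 x y s t.
Proof.
  intros Hr Hkr s t.
  assert (Hz : r ^ 2 <= center_dist2 x y r s t).
  { replace (center_dist2 x y r s t) with
      ((x s + r * normal_x x y s - x t) ^ 2 + (y s + r * normal_y x y s - y t) ^ 2)
      by (unfold center_dist2; ring).
    apply (sqr_le_of_unit_dot (normal_x x y t) (normal_y x y t)); [apply normal_unit | lra |].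
    pose proof (outer_disk_support r Hr Hkr s t).
    unfold center_line_dist, tangent_height in *. lra. }
  rewrite center_dist2_eq in Hz. lra.
Qed.

End ClosedCurve.

End ConvexCurve.

End RegularCurve.
Definition three_common_points (x1 y1 x2 y2 : R -> R) :=
  exists p1 p2 p3 : R * R,
    p1 <> p2 /\ p1 <> p3 /\ p2 <> p3 /\
    on_curve x1 y1 p1 /\ on_curve x2 y2 p1 /\
    on_curve x1 y1 p2 /\ on_curve x2 y2 p2 /\
    on_curve x1 y1 p3 /\ on_curve x2 y2 p3.

Lemma three_common_points_sym x1 y1 x2 y2 :
  three_common_points x1 y1 x2 y2 -> three_common_points x2 y2 x1 y1.
Proof. intros (p1 & p2 & p3 & H). exists p1, p2, p3. tauto. Qed.

Lemma dist2_pos_of_neq (x y : R -> R) a b : (x a, y a) <> (x b, y b) -> 0 < dist2 x y a b.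
Proof.
  intros Hne. unfold dist2.
  destruct (Req_dec (x b - x a) 0) as [Ex | Ex].
  - destruct (Req_dec (y b - y a) 0) as [Ey | Ey].
    + exfalso. apply Hne. f_equal; lra.
    + pose proof (pow2_ge_0 (x b - x a)).
      assert (0 < (y b - y a) ^ 2) by (apply pow2_gt_0; exact Ey). lra.
  - pose proof (pow2_ge_0 (y b - y a)).
    assert (0 < (x b - x a) ^ 2) by (apply pow2_gt_0; exact Ex). lra.
Qed.

Section TwoCurves.
Variables (x1 y1 x2 y2 : R -> R) (r1 r2 : R).
Hypotheses (Hr1 : 0 < r1) (Hr12 : r1 < r2).
Hypothesis Hunit1 : forall s, normal_x x1 y1 s ^ 2 + normal_y x1 y1 s ^ 2 = 1.
Hypothesis Hunit2 : forall s, normal_x x2 y2 s ^ 2 + normal_y x2 y2 s ^ 2 = 1.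
Hypothesis Hinner : forall s t, dist2 x1 y1 s t <= 2 * r1 * tangent_height x1 y1 s t.
Hypothesis Houter : forall s t,
  0 <= tangent_height x2 y2 s t /\ 2 * r2 * tangent_height x2 y2 s t <= dist2 x2 y2 s t.

Lemma no_common_triangle_opposite_longest_side aP aQ aR bP bQ bR :
  x2 bP = x1 aP -> y2 bP = y1 aP -> x2 bQ = x1 aQ -> y2 bQ = y1 aQ ->
  x2 bR = x1 aR -> y2 bR = y1 aR ->
  0 < dist2 x1 y1 aP aQ -> 0 < dist2 x1 y1 aP aR -> 0 < dist2 x1 y1 aQ aR ->
  dist2 x1 y1 aP aQ <= dist2 x1 y1 aQ aR -> dist2 x1 y1 aP aR <= dist2 x1 y1 aQ aR ->
  False.
Proof.
  intros EPx EPy EQx EQy ERx ERy HPQ HPR HQR HlQ HlR.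
  destruct (Houter bP bQ) as [HnQ0 HnQ]. destruct (Houter bP bR) as [HnR0 HnR].
  pose proof (Hinner aP aQ) as HmQ. pose proof (Hinner aP aR) as HmR.
  unfold dist2, tangent_height in *.
  rewrite EPx, EPy, EQx, EQy, ERx, ERy in *.
  apply (no_triangle_between_disks (x1 aQ - x1 aP) (y1 aQ - y1 aP)
           (x1 aR - x1 aP) (y1 aR - y1 aP) (normal_x x1 y1 aP) (normal_y x1 y1 aP)
           (normal_x x2 y2 bP) (normal_y x2 y2 bP) r1 r2);
    auto; nra.
Qed.

Lemma no_three_common_points : ~ three_common_points x1 y1 x2 y2.
Proof.
  intros (p1 & p2 & p3 & N12 & N13 & N23 & [a1 E1] & [b1 F1] & [a2 E2] & [b2 F2]
          & [a3 E3] & [b3 F3]).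
  subst p1 p2 p3.
  injection F1 as F1x F1y. injection F2 as F2x F2y. injection F3 as F3x F3y.
  pose proof (dist2_pos_of_neq x1 y1 _ _ N12). pose proof (dist2_pos_of_neq x1 y1 _ _ N13).
  pose proof (dist2_pos_of_neq x1 y1 _ _ N23).
  assert (Hsym : forall a b, dist2 x1 y1 a b = dist2 x1 y1 b a)
    by (intros; unfold dist2; ring).
  pose proof (Hsym a1 a2). pose proof (Hsym a1 a3). pose proof (Hsym a2 a3).
  destruct (Rle_or_lt (dist2 x1 y1 a1 a2) (dist2 x1 y1 a2 a3));
  destruct (Rle_or_lt (dist2 x1 y1 a1 a3) (dist2 x1 y1 a2 a3));
  destruct (Rle_or_lt (dist2 x1 y1 a1 a2) (dist2 x1 y1 a1 a3)).
  all: first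
    [ solve [apply (no_common_triangle_opposite_longest_side a1 a2 a3 b1 b2 b3); auto; lra]
    | solve [apply (no_common_triangle_opposite_longest_side a2 a1 a3 b2 b1 b3); auto; lra]
    | solve [apply (no_common_triangle_opposite_longest_side a3 a1 a2 b3 b1 b2); auto; lra] ].
Qed.

End TwoCurves.

Section ClosedConvexCurve.
Variables (x y : R -> R) (L : R).
Hypothesis Hcurve : closed_convex_C2_curve x y L.

Lemma closed_convex_curvature_kappa t : curvature x y t = kappa x y t.
Proof. destruct Hcurve as (_ & _ & _ & _ & _ & Hreg & _). exact (curvature_kappa x y Hreg t). Qed.

Lemma closed_convex_kappa_pos t : 0 < kappa x y t.
Proof.
  rewrite <- closed_convex_curvature_kappa.
  destruct Hcurve as (_ & _ & _ & _ & _ & _ & _ & Hk & _). apply Hk.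
Qed.

Lemma closed_convex_normal_unit t : normal_x x y t ^ 2 + normal_y x y t ^ 2 = 1.
Proof. destruct Hcurve as (_ & _ & _ & _ & _ & Hreg & _). exact (normal_unit x y Hreg t). Qed.

Lemma closed_convex_kappa_continuous t : continuity_pt (kappa x y) t.
Proof.
  destruct Hcurve as (_ & Hx & Hy & _ & _ & Hreg & _).
  exact (continuity_pt_kappa x y Hx Hy Hreg t).
Qed.

Lemma closed_convex_kappa_min : exists a, forall t, kappa x y a <= kappa x y t.
Proof.
  destruct Hcurve as (HL & Hx & Hy & Hper & _).
  apply (periodic_continuous_min L); [exact HL | | apply closed_convex_kappa_continuous].
  apply periodic_kappa; auto; intros t; apply Hper.
Qed.

Lemma closed_convex_kappa_max : exists b, forall t, kappa x y t <= kappa x y b.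
Proof.
  destruct Hcurve as (HL & Hx & Hy & Hper & _).
  apply (periodic_continuous_max L); [exact HL | | apply closed_convex_kappa_continuous].
  apply periodic_kappa; auto; intros t; apply Hper.
Qed.

Lemma closed_convex_inner_disk r : 0 < r -> (forall t, 1 < r * kappa x y t) ->
  forall s t, dist2 x y s t <= 2 * r * tangent_height x y s t.
Proof.
  pose proof closed_convex_kappa_pos as Hk.
  destruct Hcurve as (HL & Hx & Hy & Hper & _ & Hreg & _ & _ & Hcv).
  apply (inner_disk x y Hx Hy Hreg Hk Hcv L HL); intros t; apply Hper.
Qed.

Lemma closed_convex_outer_disk r : 0 < r -> (forall t, r * kappa x y t < 1) ->
  forall s t, 0 <= tangent_height x y s t /\ 2 * r * tangent_height x y s t <= dist2 x y s t.
Proof.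
  pose proof closed_convex_kappa_pos as Hk.
  destruct Hcurve as (HL & Hx & Hy & Hper & _ & Hreg & _ & _ & Hcv).
  intros Hr Hkr s t. split; [exact (tangent_height_nonneg x y Hx Hy Hreg Hk Hcv s t) |].
  apply (outer_disk x y Hx Hy Hreg Hk Hcv L HL); auto; intros u; apply Hper.
Qed.

End ClosedConvexCurve.

(* The radii [1/r1 = (2 k1 + k2)/3] and [1/r2 = (k1 + 2 k2)/3] separate the two
   curvature ranges. *)
Lemma no_three_common_points_of_curvature_gap x1 y1 L1 x2 y2 L2 k1 k2 :
  closed_convex_C2_curve x1 y1 L1 -> closed_convex_C2_curve x2 y2 L2 -> k2 < k1 ->
  (forall t, k1 <= kappa x1 y1 t) -> (forall t, kappa x2 y2 t <= k2) ->
  ~ three_common_points x1 y1 x2 y2.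
Proof.
  intros H1 H2 Hk12 Hk1 Hk2.
  assert (Hk2pos : 0 < k2)
    by (pose proof (closed_convex_kappa_pos _ _ _ H2 0); pose proof (Hk2 0); lra).
  set (r1 := 3 / (2 * k1 + k2)). set (r2 := 3 / (k1 + 2 * k2)).
  assert (Hr1 : 0 < r1) by (apply Rdiv_lt_0_compat; lra).
  assert (Hr2 : 0 < r2) by (apply Rdiv_lt_0_compat; lra).
  assert (Hr1k1 : r1 * k1 = 1 + (k1 - k2) / (2 * k1 + k2)) by (unfold r1; field; lra).
  assert (Hr2k2 : r2 * k2 = 1 - (k1 - k2) / (k1 + 2 * k2)) by (unfold r2; field; lra).
  assert (Hr12 : r2 - r1 = 3 * (k1 - k2) / ((2 * k1 + k2) * (k1 + 2 * k2)))
    by (unfold r1, r2; field; lra).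
  assert (0 < (k1 - k2) / (2 * k1 + k2)) by (apply Rdiv_lt_0_compat; lra).
  assert (0 < (k1 - k2) / (k1 + 2 * k2)) by (apply Rdiv_lt_0_compat; lra).
  assert (0 < 3 * (k1 - k2) / ((2 * k1 + k2) * (k1 + 2 * k2)))
    by (apply Rdiv_lt_0_compat; nra).
  apply (no_three_common_points x1 y1 x2 y2 r1 r2); [lra | lra | | | |].
  - apply (closed_convex_normal_unit _ _ _ H1).
  - apply (closed_convex_normal_unit _ _ _ H2).
  - apply (closed_convex_inner_disk _ _ _ H1 r1 Hr1).
    intros t. pose proof (Hk1 t). nra.
  - apply (closed_convex_outer_disk _ _ _ H2 r2 Hr2).
    intros t. pose proof (Hk2 t). nra.
Qed.

Lemma continuous_ranges_meet (f g : R -> R) a b a' b' :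
  (forall t, continuity_pt f t) -> (forall t, continuity_pt g t) ->
  f a <= g b' -> g a' <= f b -> exists t1 t2, f t1 = g t2.
Proof.
  intros Hf Hg Hab' Ha'b.
  destruct (Rle_or_lt (f a) (g a')) as [C | C].
  - destruct (IVT_gen f a b (g a') Hf) as [t [_ Ht]].
    { split; [apply Rle_trans with (f a); [apply Rmin_l | lra]
             | apply Rle_trans with (f b); [lra | apply Rmax_r]]. }
    exists t, a'. exact Ht.
  - destruct (IVT_gen g a' b' (f a) Hg) as [t [_ Ht]].
    { split; [apply Rle_trans with (g a'); [apply Rmin_l | lra]
             | apply Rle_trans with (g b'); [lra | apply Rmax_r]]. }
    exists a, t. symmetry. exact Ht.
Qed.

Theorem theorem4p6 (x1 y1 x2 y2 : R -> R) (L1 L2 : R) :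
  closed_convex_C2_curve x1 y1 L1 ->
  closed_convex_C2_curve x2 y2 L2 ->
  (exists p1 p2 p3 : R * R,
     p1 <> p2 /\ p1 <> p3 /\ p2 <> p3 /\
     on_curve x1 y1 p1 /\ on_curve x2 y2 p1 /\
     on_curve x1 y1 p2 /\ on_curve x2 y2 p2 /\
     on_curve x1 y1 p3 /\ on_curve x2 y2 p3) ->
  exists t1 t2 : R, curvature x1 y1 t1 = curvature x2 y2 t2.
Proof.
  intros H1 H2 Hpts. fold (three_common_points x1 y1 x2 y2) in Hpts.
  destruct (closed_convex_kappa_min _ _ _ H1) as [a1 Ha1].
  destruct (closed_convex_kappa_max _ _ _ H1) as [b1 Hb1].
  destruct (closed_convex_kappa_min _ _ _ H2) as [a2 Ha2].
  destruct (closed_convex_kappa_max _ _ _ H2) as [b2 Hb2].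
  destruct (Rlt_or_le (kappa x2 y2 b2) (kappa x1 y1 a1)) as [Gap | Meet1].
  { exfalso. exact (no_three_common_points_of_curvature_gap _ _ _ _ _ _ _ _
                      H1 H2 Gap Ha1 Hb2 Hpts). }
  destruct (Rlt_or_le (kappa x1 y1 b1) (kappa x2 y2 a2)) as [Gap | Meet2].
  { exfalso. exact (no_three_common_points_of_curvature_gap _ _ _ _ _ _ _ _
                      H2 H1 Gap Ha2 Hb1 (three_common_points_sym _ _ _ _ Hpts)). }
  destruct (continuous_ranges_meet (kappa x1 y1) (kappa x2 y2) a1 b1 a2 b2
              (closed_convex_kappa_continuous _ _ _ H1)
              (closed_convex_kappa_continuous _ _ _ H2) Meet1 Meet2) as [t1 [t2 E]].
  exists t1, t2.
  rewrite (closed_convex_curvature_kappa _ _ _ H1), (closed_convex_curvature_kappa _ _ _ H2).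
  exact E.
Qed.
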